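(* Let $\boldsymbol{y}=\sum_{i=1}^r\mathcal{A}_i(\alpha_i\boldsymbol{h}_i\boldsymbol{x}_i^* )$. Assume that for all $1\le i\le r$, $$\|\mathcal{P}_{T_i}\mathcal{A}_i^*\mathcal{A}_i\mathcal{P}_{T_i}-\mathcal{P}_{T_i}\|\le\tfrac14,\qquad\mu\le\tfrac{1}{4r},\qquad\|\mathcal{A}_i\|\le\gamma,$$ and that there exists $\boldsymbol{\lambda}\in\mathbb{C}^L$ such that $$\|\boldsymbol{h}_i\boldsymbol{x}_i^*-\mathcal{P}_{T_i}(\mathcal{A}_i^*(\boldsymbol{\lambda}))\|_F\le\alpha,\qquad\|\mathcal{P}_{T_i^\perp}(\mathcal{A}_i^*(\boldsymbol{\lambda}))\|\le\beta$$ for all $1\le i\le r$, where $(1-\beta)-2r\gamma\alpha>0$. Then $\{\alpha_i\boldsymbol{h}_i\boldsymbol{x}_i^*\}_{i=1}^r$ is the unique minimizer of $\min\sum_i\|\boldsymbol{Z}_i\|_*$ subject to $\sum_i\mathcal{A}_i(\boldsymbol{Z}_i)=\boldsymbol{y}$. In particular, one can choose $\alpha=(5r\gamma)^{-1}$ and $\beta=\frac12$.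
   Context: Standing assumption: $\boldsymbol{h}_i\in\mathbb{R}^{K_i}$, $\boldsymbol{x}_i\in\mathbb{R}^{N_i}$ real unit-norm, $\alpha_i$ scalars. $\mathcal{A}_i(\boldsymbol{Z})=\{\boldsymbol{b}_{i,l}^*\boldsymbol{Z}\boldsymbol{a}_{i,l}\}_{l=1}^L$ (given $\boldsymbol{b}_{i,l}\in\mathbb{C}^{K_i}$, $\boldsymbol{a}_{i,l}\in\mathbb{R}^{N_i}$), with adjoint $\mathcal{A}_i^*(\boldsymbol{z})=\sum_lz_l\boldsymbol{b}_{i,l}\boldsymbol{a}_{i,l}^*$ w.r.t. $\langle\boldsymbol{U},\boldsymbol{V}\rangle=\mathrm{Tr}(\boldsymbol{U}\boldsymbol{V}^* )$; $\|\mathcal{A}_i\|:=\sup_{\boldsymbol{Z}\ne0}\|\mathcal{A}_i(\boldsymbol{Z})\|/\|\boldsymbol{Z}\|_F$; norms of operators on matrix spaces are w.r.t. Frobenius norms; $\|\cdot\|$ on matrices is spectral norm. $\mathcal{P}_{T_i}(\boldsymbol{Z})=\boldsymbol{h}_i\boldsymbol{h}_i^*\boldsymbol{Z}+(\boldsymbol{I}-\boldsymbol{h}_i\boldsymbol{h}_i^* )\boldsymbol{Z}\boldsymbol{x}_i\boldsymbol{x}_i^*$, $\mathcal{P}_{T_i^\perp}(\boldsymbol{Z})=(\boldsymbol{I}-\boldsymbol{h}_i\boldsymbol{h}_i^* )\boldsymbol{Z}(\boldsymbol{I}-\boldsymbol{x}_i\boldsymbol{x}_i^* )$. $\mu:=\max_{j\ne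 k}\|\mathcal{P}_{T_j}\mathcal{A}_j^*\mathcal{A}_k\mathcal{P}_{T_k}\|$. *)

From HB Require Import structures.
From mathcomp Require Import all_boot all_order all_algebra.
From mathcomp Require Import complex.
From mathcomp Require Import boolp classical_sets reals.
Set Implicit Arguments. Unset Strict Implicit. Unset Printing Implicit Defensive.
Import Order.TTheory GRing.Theory Num.Theory.
Local Open Scope ring_scope.

Section Defs.
Variable R : realType.
Local Notation C := (R[i]).

Definition cabs2 (z : C) : R := complex.Re z ^+ 2 + complex.Im z ^+ 2.

Definition frob m n (M : 'M[C]_(m, n)) : R :=
  Num.sqrt (\sum_(i < m) \sum_(j < n) cabs2 (M i j)).

Definition adjmx m n (M : 'M[C]_(m, n)) : 'M[C]_(n, m) := (map_mx Num.conj M)^T.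

Definition cmx m n (M : 'M[R]_(m, n)) : 'M[C]_(m, n) := map_mx (fun a : R => real_complex R a) M.

Definition opnorm m n p q (f : 'M[C]_(m, n) -> 'M[C]_(p, q)) : R :=
  sup [set t : R | exists Z : 'M[C]_(m, n), Z != 0 /\ t = frob (f Z) / frob Z]%classic.

Definition specnorm m n (M : 'M[C]_(m, n)) : R :=
  opnorm (fun v : 'cV[C]_n => M *m v).

Definition eigvals n (A : 'M[C]_n) : seq C :=
  sval (closed_field_poly_normal (char_poly A)).

(* nuclear norm = sum of the singular values = sum of square roots of the
   eigenvalues of M^* M (which are real and nonnegative) *)
Definition nucnorm m n (M : 'M[C]_(m, n)) : R :=
  \sum_(z <- eigvals (adjmx M *m M)) Num.sqrt (complex.Re z).

Definition Aop K N L (b : 'I_L -> 'cV[C]_K) (a : 'I_L -> 'cV[R]_N)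
  (Z : 'M[C]_(K, N)) : 'cV[C]_L :=
  \col_(l < L) (adjmx (b l) *m Z *m cmx (a l)) 0 0.

Definition Aadj K N L (b : 'I_L -> 'cV[C]_K) (a : 'I_L -> 'cV[R]_N)
  (z : 'cV[C]_L) : 'M[C]_(K, N) :=
  \sum_(l < L) z l 0 *: (b l *m adjmx (cmx (a l))).

Definition PT K N (h : 'cV[R]_K) (x : 'cV[R]_N) (Z : 'M[C]_(K, N)) : 'M[C]_(K, N) :=
  let H := cmx h *m adjmx (cmx h) in
  let X := cmx x *m adjmx (cmx x) in
  H *m Z + (1%:M - H) *m Z *m X.

Definition PTperp K N (h : 'cV[R]_K) (x : 'cV[R]_N) (Z : 'M[C]_(K, N)) : 'M[C]_(K, N) :=
  let H := cmx h *m adjmx (cmx h) in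
  let X := cmx x *m adjmx (cmx x) in
  (1%:M - H) *m Z *m (1%:M - X).

Definition unitvec n (v : 'cV[R]_n) : Prop := \sum_(k < n) v k 0 ^+ 2 = 1.

Definition mu r L (K N : 'I_r -> nat)
  (h : forall i, 'cV[R]_(K i)) (x : forall i, 'cV[R]_(N i))
  (b : forall i, 'I_L -> 'cV[C]_(K i)) (a : forall i, 'I_L -> 'cV[R]_(N i)) : R :=
  \big[Num.max/0]_(j < r) \big[Num.max/0]_(k < r | k != j)
    opnorm (fun Z : 'M[C]_(K k, N k) =>
      PT (h j) (x j) (Aadj (b j) (a j) (Aop (b k) (a k) (PT (h k) (x k) Z)))).

Definition unique_minimizer r L (K N : 'I_r -> nat)
  (b : forall i, 'I_L -> 'cV[C]_(K i)) (a : forall i, 'I_L -> 'cV[R]_(N i))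
  (y : 'cV[C]_L) (X : forall i, 'M[C]_(K i, N i)) : Prop :=
  (\sum_(i < r) Aop (b i) (a i) (X i) = y) /\
  forall Z : forall i, 'M[C]_(K i, N i),
    \sum_(i < r) Aop (b i) (a i) (Z i) = y ->
    ~ (forall i, Z i = X i) ->
    \sum_(i < r) nucnorm (X i) < \sum_(i < r) nucnorm (Z i).

End Defs.

(* Write a feasible point as [Z_i = X_i + H_i] with [sum_i A_i(H_i) = 0] and split
   [H_i] into its tangent part [P_T H_i] and its normal part [P_T^perp H_i].  The
   subgradient inequality for the nuclear norm at the rank-one [X_i], in which the
   dual vector [A_i^*(lam)] replaces [h_i x_i^*] up to the errors [alpha] and [beta],
   gives  sum_i ||Z_i||_* >= sum_i ||X_i||_* + (1 - beta) T - alpha S,  where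
   [T = sum_i ||P_T^perp H_i||_*] and [S = sum_i ||P_T H_i||_F]: the terms
   <A_i^*(lam), H_i> add up to <lam, sum_i A_i(H_i)> = 0.  Local isometry and
   incoherence give ||sum_i A_i(P_T H_i)||^2 >= Q/2 with [Q = sum_i ||P_T H_i||_F^2
   >= S^2/r], whereas sum_i A_i(P_T H_i) = - sum_i A_i(P_T^perp H_i) has norm at
   most [gamma T].  Hence [S <= 2 r gamma T], and the gain is at least
   [(1 - beta - 2 r gamma alpha) T], which is positive unless every [H_i] is 0. *)

From HB Require Import structures.
From mathcomp Require Import all_boot all_order all_algebra.
From mathcomp Require Import complex.
From mathcomp Require Import boolp classical_sets reals.
From mathcomp Require Import ring lra.
Set Implicit Arguments. Unset Strict Implicit. Unset Printing Implicit Defensive.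
Import Order.TTheory GRing.Theory Num.Theory.
Local Open Scope ring_scope.
Local Open Scope complex_scope.

(* [Num.Theory] exports its own [Re] and [Im], for numeric closed fields. *)
Local Notation Re := (@complex.Re _).
Local Notation Im := (@complex.Im _).

(** * Frobenius geometry of complex matrices *)

Section ComplexScalars.
Variable R : realType.
Local Notation C := R[i].

Lemma cReD (u v : C) : Re (u + v) = Re u + Re v. Proof. by case: u; case: v. Qed.
Lemma cImD (u v : C) : Im (u + v) = Im u + Im v. Proof. by case: u; case: v. Qed.
Lemma cReN (u : C) : Re (- u) = - Re u. Proof. by case: u. Qed.
Lemma cImN (u : C) : Im (- u) = - Im u. Proof. by case: u. Qed.
Lemma cReM (u v : C) : Re (u * v) = Re u * Re v - Im u * Im v.
Proof. by case: u; case: v. Qed.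
Lemma cImM (u v : C) : Im (u * v) = Re u * Im v + Im u * Re v.
Proof. by case: u; case: v. Qed.
Lemma cReJ (u : C) : Re (Num.conj u) = Re u. Proof. by case: u. Qed.
Lemma cImJ (u : C) : Im (Num.conj u) = - Im u. Proof. by case: u. Qed.

Lemma cRe_sum I (s : seq I) (P : pred I) (F : I -> C) :
  Re (\sum_(i <- s | P i) F i) = \sum_(i <- s | P i) Re (F i).
Proof. exact: (big_morph _ cReD (erefl : Re (0 : C) = 0)). Qed.
Lemma cIm_sum I (s : seq I) (P : pred I) (F : I -> C) :
  Im (\sum_(i <- s | P i) F i) = \sum_(i <- s | P i) Im (F i).
Proof. exact: (big_morph _ cImD (erefl : Im (0 : C) = 0)). Qed.

Lemma cabs2_ge0 (z : C) : 0 <= cabs2 z.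
Proof. by rewrite /cabs2 addr_ge0 // sqr_ge0. Qed.

Lemma cabs2M (u v : C) : cabs2 (u * v) = cabs2 u * cabs2 v.
Proof. rewrite /cabs2 cReM cImM; ring. Qed.

Lemma cabs2_eq0 (z : C) : cabs2 z = 0 -> z = 0.
Proof.
case: z => a b; rewrite /cabs2 /= => /eqP.
by rewrite paddr_eq0 ?sqr_ge0 // !sqrf_eq0 => /andP[/eqP-> /eqP->].
Qed.

End ComplexScalars.

Lemma ler_of_sqr (R : realDomainType) (x y : R) : 0 <= y -> x ^+ 2 <= y ^+ 2 -> x <= y.
Proof.
move=> y0 h; have [x0|x0] := leP x 0; first exact: le_trans x0 y0.
by rewrite -ler_sqr // qualifE /= ltW.
Qed.

Section FrobeniusInnerProduct.
Variable R : realType.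
Local Notation C := R[i].
Variables m n : nat.
Implicit Types U V W : 'M[C]_(m, n).

(* The real part of the trace inner product, i.e. the Euclidean inner product of
   the realification of ['M[C]_(m, n)]; its norm is [frob]. *)
Definition rdot U V : R :=
  \sum_(i < m) \sum_(j < n) (Re (U i j) * Re (V i j) + Im (U i j) * Im (V i j)).

Lemma rdotC U V : rdot U V = rdot V U.
Proof. by apply: eq_bigr => i _; apply: eq_bigr => j _; rewrite mulrC [Im _ * _]mulrC. Qed.

Lemma rdotDl U V W : rdot (U + V) W = rdot U W + rdot V W.
Proof.
rewrite /rdot -big_split; apply: eq_bigr => i _; rewrite -big_split.
by apply: eq_bigr => j _; rewrite !mxE cReD cImD /=; ring.
Qed.

Lemma rdotNl U W : rdot (- U) W = - rdot U W.
Proof.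
rewrite /rdot -sumrN; apply: eq_bigr => i _; rewrite -sumrN.
by apply: eq_bigr => j _; rewrite !mxE cReN cImN; ring.
Qed.

Lemma rdotZl (a : R) U W : rdot (a%:C *: U) W = a * rdot U W.
Proof.
rewrite /rdot mulr_sumr; apply: eq_bigr => i _; rewrite mulr_sumr.
by apply: eq_bigr => j _; rewrite !mxE cReM cImM /=; ring.
Qed.

Lemma rdot0l W : rdot 0 W = 0.
Proof. by rewrite /rdot big1 // => i _; rewrite big1 // => j _; rewrite !mxE /= !mul0r addr0. Qed.

Lemma rdotBl U V W : rdot (U - V) W = rdot U W - rdot V W.
Proof. by rewrite rdotDl rdotNl. Qed.
Lemma rdotDr U V W : rdot W (U + V) = rdot W U + rdot W V.
Proof. by rewrite rdotC rdotDl rdotC (rdotC V). Qed.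
Lemma rdotNr U W : rdot W (- U) = - rdot W U.
Proof. by rewrite rdotC rdotNl rdotC. Qed.
Lemma rdotBr U V W : rdot W (U - V) = rdot W U - rdot W V.
Proof. by rewrite rdotDr rdotNr. Qed.
Lemma rdotZr (a : R) U W : rdot W (a%:C *: U) = a * rdot W U.
Proof. by rewrite rdotC rdotZl rdotC. Qed.
Lemma rdot0r W : rdot W 0 = 0.
Proof. by rewrite rdotC rdot0l. Qed.

Lemma rdot_suml I (s : seq I) (P : pred I) (F : I -> 'M[C]_(m, n)) W :
  rdot (\sum_(k <- s | P k) F k) W = \sum_(k <- s | P k) rdot (F k) W.
Proof. exact: (big_morph (rdot^~ W) (fun U V => rdotDl U V W) (rdot0l W)). Qed.
Lemma rdot_sumr I (s : seq I) (P : pred I) (F : I -> 'M[C]_(m, n)) W :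
  rdot W (\sum_(k <- s | P k) F k) = \sum_(k <- s | P k) rdot W (F k).
Proof. exact: (big_morph (rdot W) (fun U V => rdotDr U V W) (rdot0r W)). Qed.

Lemma rdot_self U : rdot U U = \sum_i \sum_j cabs2 (U i j).
Proof. by apply: eq_bigr => i _; apply: eq_bigr => j _; rewrite /cabs2 !expr2. Qed.

Lemma rdot_self_ge0 U : 0 <= rdot U U.
Proof. by rewrite rdot_self; do 2!(apply: sumr_ge0 => ? _); exact: cabs2_ge0. Qed.

Lemma cabs2_le_rdot_self U i j : cabs2 (U i j) <= rdot U U.
Proof.
rewrite rdot_self (bigD1 i) //= (bigD1 j) //= -addrA lerDl addr_ge0 //.
  by apply: sumr_ge0 => ? _; exact: cabs2_ge0.
by do 2!(apply: sumr_ge0 => ? _); exact: cabs2_ge0.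
Qed.

Lemma frobE U : frob U = Num.sqrt (rdot U U).
Proof. by rewrite rdot_self. Qed.

Lemma frob_ge0 U : 0 <= frob U.
Proof. exact: sqrtr_ge0. Qed.

Lemma frob_sq U : frob U ^+ 2 = rdot U U.
Proof. by rewrite frobE sqr_sqrtr // rdot_self_ge0. Qed.

Lemma frob0 : frob (0 : 'M[C]_(m, n)) = 0.
Proof. by rewrite frobE rdot0l sqrtr0. Qed.

Lemma frob_eq0 U : frob U = 0 -> U = 0.
Proof.
move=> U0; apply/matrixP => i j; rewrite mxE; apply: cabs2_eq0.
apply/eqP; rewrite eq_le cabs2_ge0 andbT.
by have := cabs2_le_rdot_self U i j; rewrite -frob_sq U0 expr0n.
Qed.

Lemma frob_gt0 U : U != 0 -> 0 < frob U.
Proof. by move=> U0; rewrite lt_def frob_ge0 andbT; apply: contra U0 => /eqP/frob_eq0->. Qed.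

Lemma frobN U : frob (- U) = frob U.
Proof. by rewrite !frobE rdotNl rdotNr opprK. Qed.

Lemma rdot_le U V : rdot U V <= frob U * frob V.
Proof.
set a := rdot V V; set b := rdot U V; set c := rdot U U.
have quad t : 0 <= c - 2 * t * b + t ^+ 2 * a.
  have := rdot_self_ge0 (U - t%:C *: V).
  by rewrite rdotBl !rdotBr !rdotZl !rdotZr (rdotC V U) -/a -/b -/c; lra.
have a0 : 0 <= a by exact: rdot_self_ge0.
have [b0|b0] := leP b 0; first by apply: le_trans b0 _; rewrite mulr_ge0 // frob_ge0.
apply: ler_of_sqr; first by rewrite mulr_ge0 // frob_ge0.
rewrite exprMn !frob_sq -/a -/c.
have [a00|a_neq0] := eqVneq a 0.
  have := quad ((c + 1) / (2 * b)); rewrite a00 mulr0 addr0.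
  have -> : 2 * ((c + 1) / (2 * b)) * b = c + 1 by field; rewrite gt_eqF.
  lra.
have := quad (b / a); have : b / a * a = b by rewrite divfK.
set t := b / a; nra.
Qed.

Lemma norm_rdot_le U V : `|rdot U V| <= frob U * frob V.
Proof.
have [_|_] := ler0P (rdot U V); last exact: rdot_le.
by rewrite -rdotNl -(frobN U) rdot_le.
Qed.

Lemma frobD U V : frob (U + V) <= frob U + frob V.
Proof.
apply: ler_of_sqr; first by rewrite addr_ge0 // frob_ge0.
rewrite frob_sq rdotDl !rdotDr (rdotC V U) sqrrD !frob_sq.
have := rdot_le U V; lra.
Qed.

Lemma frob_sum I (s : seq I) (P : pred I) (F : I -> 'M[C]_(m, n)) :
  frob (\sum_(k <- s | P k) F k) <= \sum_(k <- s | P k) frob (F k).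
Proof.
elim/big_rec2: _ => [|k y1 y2 _ h]; first by rewrite frob0.
by apply: le_trans (frobD _ _) _; rewrite lerD2l.
Qed.

Lemma frobZ (c : C) U : frob (c *: U) = Num.sqrt (cabs2 c) * frob U.
Proof.
rewrite /frob -sqrtrM ?cabs2_ge0 // mulr_sumr; congr Num.sqrt.
by apply: eq_bigr => i _; rewrite mulr_sumr; apply: eq_bigr => j _; rewrite mxE cabs2M.
Qed.

Lemma frobZr (a : R) U : frob (a%:C *: U) = `|a| * frob U.
Proof. by rewrite frobZ /cabs2 /= expr0n addr0 sqrtr_sqr. Qed.

Lemma sqrt_cabs2_le_frob U i j : Num.sqrt (cabs2 (U i j)) <= frob U.
Proof. by rewrite frobE ler_wsqrtr // cabs2_le_rdot_self. Qed.

End FrobeniusInnerProduct.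

Section Adjoint.
Variable R : realType.
Local Notation C := R[i].
Local Notation conj := (@Num.conj C).

Lemma adjmxE m n (M : 'M[C]_(m, n)) i j : adjmx M i j = conj (M j i).
Proof. by rewrite !mxE. Qed.

Lemma adjmxK m n (M : 'M[C]_(m, n)) : adjmx (adjmx M) = M.
Proof. by apply/matrixP => i j; rewrite !adjmxE conjCK. Qed.

Lemma adjmxM m n p (A : 'M[C]_(m, n)) (B : 'M[C]_(n, p)) :
  adjmx (A *m B) = adjmx B *m adjmx A.
Proof.
apply/matrixP => i j; rewrite adjmxE !mxE rmorph_sum; apply: eq_bigr => k _.
by rewrite rmorphM /= !adjmxE mulrC.
Qed.

Lemma adjmxD m n (A B : 'M[C]_(m, n)) : adjmx (A + B) = adjmx A + adjmx B.
Proof. by apply/matrixP => i j; rewrite !mxE rmorphD. Qed.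
Lemma adjmxN m n (A : 'M[C]_(m, n)) : adjmx (- A) = - adjmx A.
Proof. by apply/matrixP => i j; rewrite !mxE rmorphN. Qed.
Lemma adjmxB m n (A B : 'M[C]_(m, n)) : adjmx (A - B) = adjmx A - adjmx B.
Proof. by rewrite adjmxD adjmxN. Qed.
Lemma adjmxZ m n c (A : 'M[C]_(m, n)) : adjmx (c *: A) = conj c *: adjmx A.
Proof. by apply/matrixP => i j; rewrite !mxE rmorphM. Qed.
Lemma adjmx1 n : adjmx (1%:M : 'M[C]_n) = 1%:M.
Proof. by apply/matrixP => i j; rewrite !mxE rmorphMn rmorph1 eq_sym. Qed.

Lemma map_conj_trmx m n (M : 'M[C]_(m, n)) : map_mx conj M^T = adjmx M.
Proof. by rewrite /adjmx map_trmx. Qed.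

Lemma adjmx_cmx m n (M : 'M[R]_(m, n)) : adjmx (cmx M) = cmx M^T.
Proof.
by apply/matrixP => i j; rewrite adjmxE !mxE; apply/eqP; rewrite eq_complex /= oppr0 !eqxx.
Qed.

Lemma adjmx_mulE m n p (X : 'M[C]_(m, n)) (Y : 'M[C]_(m, p)) j k :
  (adjmx X *m Y) j k = \sum_i conj (X i j) * Y i k.
Proof. by rewrite mxE; apply: eq_bigr => i _; rewrite adjmxE. Qed.

Lemma rdotE m n (U V : 'M[C]_(m, n)) : rdot U V = Re (\tr (U *m adjmx V)).
Proof.
rewrite /mxtrace cRe_sum; apply: eq_bigr => i _.
rewrite mxE cRe_sum; apply: eq_bigr => j _; rewrite adjmxE cReM cReJ cImJ; ring.
Qed.

Lemma rdot_mulmxl m n p (A : 'M[C]_(m, n)) (U : 'M[C]_(n, p)) V :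
  rdot (A *m U) V = rdot U (adjmx A *m V).
Proof. by rewrite !rdotE adjmxM adjmxK -mulmxA mxtrace_mulC mulmxA. Qed.

Lemma rdot_mulmxr m n p (B : 'M[C]_(n, p)) (U : 'M[C]_(m, n)) V :
  rdot (U *m B) V = rdot U (V *m adjmx B).
Proof. by rewrite !rdotE adjmxM adjmxK mulmxA. Qed.

Lemma rdot_cols m n (X Y : 'M[C]_(m, n)) : rdot X Y = \sum_j rdot (col j X) (col j Y).
Proof.
rewrite /rdot exchange_big; apply: eq_bigr => j _; apply: eq_bigr => i _.
by rewrite big_ord1 !mxE.
Qed.

Lemma adjmx_mul_self_diag m n (X : 'M[C]_(m, n)) j :
  (adjmx X *m X) j j = (frob (col j X) ^+ 2)%:C.
Proof.
have ReE : Re ((adjmx X *m X) j j) = frob (col j X) ^+ 2.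
  rewrite adjmx_mulE frob_sq cRe_sum; apply: eq_bigr => i _.
  by rewrite big_ord1 !mxE cReM cReJ cImJ; ring.
have ImE : Im ((adjmx X *m X) j j) = 0.
  by rewrite adjmx_mulE cIm_sum big1 // => i _; rewrite cImM cReJ cImJ; ring.
by apply/eqP; rewrite eq_complex ReE ImE /= !eqxx.
Qed.

End Adjoint.

Section OperatorNorm.
Variable R : realType.
Local Notation C := R[i].
Variables m n p q : nat.
Implicit Type f : 'M[C]_(m, n) -> 'M[C]_(p, q).

Lemma opnorm_ge0 f : 0 <= opnorm f.
Proof.
rewrite /opnorm; set S := (X in sup X).
have [hs|hs] := pselect (has_sup S); last by rewrite sup_out.
have [[_ [Z [Z0 _]]] _] := hs.
have /(sup_upper_bound hs) : S (frob (f Z) / frob Z) by exists Z.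
by apply: le_trans; rewrite divr_ge0 ?frob_ge0.
Qed.

(* Boundedness of the quotients defining [opnorm f] comes from expanding
   [Z] on the matrix units. *)
Lemma frob_le_opnorm f :
  (forall U V, f (U + V) = f U + f V) -> (forall c U, f (c *: U) = c *: f U) ->
  forall Z, frob (f Z) <= opnorm f * frob Z.
Proof.
move=> fD fZ.
have f0 : f 0 = 0 by apply: (addrI (f 0)); rewrite -fD !addr0.
set B := \sum_(i < m) \sum_(j < n) frob (f (delta_mx i j)).
have bnd Z : frob (f Z) <= frob Z * B.
  rewrite {1}(matrix_sum_delta Z) (big_morph f fD f0).
  apply: le_trans (frob_sum _ _ _) _; rewrite /B mulr_sumr; apply: ler_sum => i _.
  rewrite (big_morph f fD f0); apply: le_trans (frob_sum _ _ _) _; rewrite mulr_sumr.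
  apply: ler_sum => j _; rewrite fZ frobZ ler_wpM2r ?frob_ge0 //.
  exact: sqrt_cabs2_le_frob.
move=> Z; have [->|Z0] := eqVneq Z 0; first by rewrite f0 !frob0 mulr0.
rewrite -ler_pdivrMr ?frob_gt0 //; apply: sup_upper_bound; last by exists Z.
split; first by exists (frob (f Z) / frob Z); exists Z.
by exists B => _ [W [W0 ->]]; rewrite ler_pdivrMr ?frob_gt0 // mulrC.
Qed.

End OperatorNorm.

(** * Tangent spaces and measurement operators *)

Section TangentProjections.
Variable R : realType.
Local Notation C := R[i].

Lemma unitvec_adj_mul n (v : 'cV[R]_n) : unitvec v -> adjmx (cmx v) *m cmx v = 1%:M.
Proof.
move=> vu; apply/matrixP => i j; rewrite !ord1 !mxE.
under eq_bigr => k _ do rewrite adjmx_cmx !mxE -rmorphM.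
by rewrite -rmorph_sum (eq_bigr _ (fun k _ => esym (expr2 _))) vu.
Qed.

Definition outer m n (u : 'cV[R]_m) (v : 'cV[R]_n) : 'M[C]_(m, n) := cmx u *m adjmx (cmx v).

(* Locked so that [mulmxDl] and friends do not unfold them. *)
Fact lproj_key : unit. Proof. exact: tt. Qed.
Definition lproj := locked_with lproj_key (fun n (v : 'cV[R]_n) => outer v v).
Fact lproj_perp_key : unit. Proof. exact: tt. Qed.
Definition lproj_perp :=
  locked_with lproj_perp_key (fun n (v : 'cV[R]_n) => 1%:M - lproj v : 'M[C]_n).

Lemma lprojE n (v : 'cV[R]_n) : lproj v = cmx v *m adjmx (cmx v).
Proof. by rewrite /lproj unlock. Qed.

Lemma lproj_perpE n (v : 'cV[R]_n) : lproj_perp v = 1%:M - lproj v.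
Proof. by rewrite /lproj_perp unlock. Qed.

Section Line.
Variables (n : nat) (v : 'cV[R]_n).
Hypothesis vu : unitvec v.
Local Notation H := (lproj v).
Local Notation P := (lproj_perp v).

Lemma lprojK : H *m H = H.
Proof. by rewrite lprojE mulmxA -(mulmxA (cmx v)) unitvec_adj_mul // mulmx1. Qed.
Lemma adjmx_lproj : adjmx H = H.
Proof. by rewrite lprojE adjmxM adjmxK. Qed.
Lemma adjmx_lproj_perp : adjmx P = P.
Proof. by rewrite lproj_perpE adjmxB adjmx1 adjmx_lproj. Qed.
Lemma lproj_perp_mul : P *m H = 0.
Proof. by rewrite lproj_perpE mulmxBl mul1mx lprojK subrr. Qed.
Lemma lproj_mul_perp : H *m P = 0.
Proof. by rewrite lproj_perpE mulmxBr mulmx1 lprojK subrr. Qed.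
Lemma lproj_perpK : P *m P = P.
Proof. by rewrite {1}lproj_perpE mulmxBl mul1mx lproj_mul_perp subr0. Qed.

Lemma lproj_outer m (w : 'cV[R]_m) : H *m outer v w = outer v w.
Proof. by rewrite lprojE mulmxA -(mulmxA (cmx v)) unitvec_adj_mul // mulmx1. Qed.
Lemma lproj_perp_outer m (w : 'cV[R]_m) : P *m outer v w = 0.
Proof. by rewrite lproj_perpE mulmxBl mul1mx lproj_outer subrr. Qed.

Lemma rdot_mul_unitvec p (z z' : 'M[C]_(1, p)) : rdot (cmx v *m z) (cmx v *m z') = rdot z z'.
Proof. by rewrite rdot_mulmxl mulmxA unitvec_adj_mul // mul1mx. Qed.

Lemma frob_lproj_perp_sq p (u : 'M[C]_(n, p)) :
  frob u ^+ 2 = frob (P *m u) ^+ 2 + frob (H *m u) ^+ 2.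
Proof.
rewrite !frob_sq; have {1 2}-> : u = P *m u + H *m u by rewrite lproj_perpE mulmxBl mul1mx subrK.
have PH0 : rdot (P *m u) (H *m u) = 0.
  by rewrite rdot_mulmxl adjmx_lproj_perp mulmxA lproj_perp_mul mul0mx rdot0r.
by rewrite rdotDl !rdotDr (rdotC (H *m u)) PH0 addr0 add0r.
Qed.

Lemma frob_lproj_perp_le p (u : 'M[C]_(n, p)) : frob (P *m u) <= frob u.
Proof.
apply: ler_of_sqr; first exact: frob_ge0.
by rewrite (frob_lproj_perp_sq u) lerDl frob_sq rdot_self_ge0.
Qed.

End Line.

Section Tangent.
Variables (K N : nat) (h : 'cV[R]_K) (x : 'cV[R]_N).
Hypotheses (hu : unitvec h) (xu : unitvec x).
Local Notation PT := (PT h x).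
Local Notation PTperp := (PTperp h x).

Lemma PTE Z : PT Z = lproj h *m Z + lproj_perp h *m Z *m lproj x.
Proof. by rewrite !lproj_perpE !lprojE. Qed.

Lemma PTperpE Z : PTperp Z = lproj_perp h *m Z *m lproj_perp x.
Proof. by rewrite !lproj_perpE !lprojE. Qed.

Lemma PTD U V : PT (U + V) = PT U + PT V.
Proof. by rewrite !PTE !mulmxDr !mulmxDl addrACA. Qed.
Lemma PTZ c U : PT (c *: U) = c *: PT U.
Proof. by rewrite !PTE scalerDr -!scalemxAr -!scalemxAl. Qed.
Lemma PTB U V : PT (U - V) = PT U - PT V.
Proof. by move: (PTD (U - V) V); rewrite subrK => ->; rewrite addrK. Qed.

Lemma PT_id Z : PT (PT Z) = PT Z.
Proof.
rewrite !PTE !mulmxDr !mulmxDl !mulmxA lprojK // lproj_mul_perp // lproj_perp_mul //.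
by rewrite lproj_perpK // !mul0mx addr0 add0r -(mulmxA _ (lproj x)) lprojK.
Qed.

Lemma rdot_PT U V : rdot (PT U) V = rdot U (PT V).
Proof.
rewrite !PTE rdotDl rdotDr rdot_mulmxl adjmx_lproj //; congr (_ + _).
by rewrite rdot_mulmxr rdot_mulmxl adjmx_lproj // adjmx_lproj_perp // mulmxA.
Qed.

Lemma PTperp_sub Z : PTperp Z = Z - PT Z.
Proof.
rewrite PTperpE PTE (lproj_perpE x) mulmxBr mulmx1 (lproj_perpE h) mulmxBl mul1mx.
by rewrite opprD addrA.
Qed.

Lemma PT_PTperp Z : PT (PTperp Z) = 0.
Proof. by rewrite PTperp_sub PTB PT_id subrr. Qed.

Lemma PTperp_id Z : PTperp (PTperp Z) = PTperp Z.
Proof. by rewrite {1}PTperp_sub PT_PTperp subr0. Qed.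

Lemma rdot_PTperp U V : rdot (PTperp U) V = rdot U (PTperp V).
Proof. by rewrite !PTperp_sub rdotBl rdotBr rdot_PT. Qed.

Lemma PT_outer : PT (outer h x) = outer h x.
Proof. by rewrite PTE lproj_outer // lproj_perp_outer // !mul0mx addr0. Qed.

Lemma rdot_outer : rdot (outer h x) (outer h x) = 1.
Proof.
rewrite rdotE /outer adjmxM adjmxK mulmxA -(mulmxA (cmx h)) unitvec_adj_mul // mulmx1.
by rewrite mxtrace_mulC unitvec_adj_mul // mxtrace1.
Qed.

End Tangent.

End TangentProjections.

Section Measurements.
Variable R : realType.
Local Notation C := R[i].
Variables (K N L : nat) (b : 'I_L -> 'cV[C]_K) (a : 'I_L -> 'cV[R]_N).

Lemma AopE Z l j : Aop b a Z l j = (adjmx (b l) *m Z *m cmx (a l)) 0 0.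
Proof. by rewrite mxE. Qed.

Lemma AopD U V : Aop b a (U + V) = Aop b a U + Aop b a V.
Proof. by apply/matrixP => l j; rewrite [in RHS]mxE !AopE mulmxDr mulmxDl mxE. Qed.
Lemma AopZ c U : Aop b a (c *: U) = c *: Aop b a U.
Proof. by apply/matrixP => l j; rewrite [in RHS]mxE !AopE -scalemxAr -scalemxAl mxE. Qed.
Lemma AopB U V : Aop b a (U - V) = Aop b a U - Aop b a V.
Proof. by move: (AopD (U - V) V); rewrite subrK => ->; rewrite addrK. Qed.

Lemma AadjD u v : Aadj b a (u + v) = Aadj b a u + Aadj b a v.
Proof. by rewrite /Aadj -big_split; apply: eq_bigr => l _; rewrite mxE scalerDl. Qed.
Lemma AadjZ c u : Aadj b a (c *: u) = c *: Aadj b a u.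
Proof. by rewrite /Aadj scaler_sumr; apply: eq_bigr => l _; rewrite mxE scalerA. Qed.

Lemma rdot_Aop Z u : rdot (Aop b a Z) u = rdot Z (Aadj b a u).
Proof.
rewrite {1}/rdot /Aadj rdot_sumr; apply: eq_bigr => l _.
rewrite big_ord1 rdotE adjmxZ -scalemxAr mxtraceZ adjmxM adjmxK mulmxA.
rewrite mxtrace_mulC mulmxA /mxtrace big_ord1 -(AopE Z l 0) cReM cReJ cImJ; ring.
Qed.

End Measurements.

(** * Nuclear norm *)

Lemma char_poly_similar (F : comNzRingType) n (Q D P : 'M[F]_n) :
  Q *m P = 1%:M -> char_poly (Q *m D *m P) = char_poly D.
Proof.
move=> QP; rewrite /char_poly /char_poly_mx.
set Q' := map_mx polyC Q; set P' := map_mx polyC P.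
have QP' : Q' *m P' = 1%:M by rewrite -map_mxM QP map_mx1.
have eX : ('X%:M : 'M[{poly F}]_n) = Q' *m 'X%:M *m P'.
  by rewrite mul_mx_scalar -scalemxAl QP' scalemx1.
rewrite !map_mxM -/Q' -/P' {1}eX -mulmxBl -mulmxBr !det_mulmx.
by rewrite mulrAC -det_mulmx QP' det1 mul1r.
Qed.

Section SingularValues.
Variable R : realType.
Local Notation C := R[i].
Variables (m n : nat) (M : 'M[C]_(m, n)).
Local Notation G := (adjmx M *m M).

(* [M^* M = V D V^*] with [V] unitary, so the columns of [M V] are orthogonal and
   their norms are the singular values of [M]. *)
Definition svd_rot : 'M[C]_n := adjmx (spectralmx G).
Definition svd_diag : 'rV[C]_n := spectral_diag G.
Definition svd_cols : 'M[C]_(m, n) := M *m svd_rot.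

Lemma mul_svd_rot_adj : svd_rot *m adjmx svd_rot = 1%:M.
Proof.
rewrite /svd_rot adjmxK -(map_conj_trmx (spectralmx G)) -invmx_unitary ?spectral_unitarymx //.
by rewrite mulVmx // spectral_unit.
Qed.

Lemma mul_adj_svd_rot : adjmx svd_rot *m svd_rot = 1%:M.
Proof.
rewrite /svd_rot adjmxK -(map_conj_trmx (spectralmx G)).
by apply/unitarymxP; exact: spectral_unitarymx.
Qed.

Lemma gram_spectral : G = svd_rot *m diag_mx svd_diag *m adjmx svd_rot.
Proof.
have normalG : G \is normalmx.
  by apply/normalmxP; rewrite !map_conj_trmx adjmxM adjmxK.
have P_unitary := spectral_unitarymx G.
rewrite /svd_rot /svd_diag adjmxK -(map_conj_trmx (spectralmx G)) -invmx_unitary //.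
exact/orthomx_spectralP.
Qed.

Lemma svd_cols_gram : adjmx svd_cols *m svd_cols = diag_mx svd_diag.
Proof.
rewrite /svd_cols adjmxM -mulmxA (mulmxA (adjmx M)) gram_spectral.
by rewrite !mulmxA mul_adj_svd_rot mul1mx -mulmxA mul_adj_svd_rot mulmx1.
Qed.

Lemma svd_diagE j : svd_diag 0 j = (frob (col j svd_cols) ^+ 2)%:C.
Proof. by rewrite -adjmx_mul_self_diag svd_cols_gram mxE eqxx mulr1n. Qed.

Lemma svd_cols_orthogonal j k : j != k -> (adjmx svd_cols *m svd_cols) j k = 0.
Proof. by move=> jk; rewrite svd_cols_gram mxE (negbTE jk) mulr0n. Qed.

Lemma eigvals_gram : perm_eq (eigvals G) [seq svd_diag 0 i | i <- enum 'I_n].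
Proof.
apply: prod_XsubC_eq.
have := svalP (closed_field_poly_normal (char_poly G)).
rewrite -/(eigvals _) (monicP (char_poly_monic _)) scale1r => <-.
rewrite big_map big_enum /= {1}gram_spectral char_poly_similar ?mul_svd_rot_adj //.
rewrite char_poly_trig ?diag_mx_is_trig //; apply: eq_bigr => i _.
by rewrite mxE eqxx mulr1n.
Qed.

Lemma nucnormE : nucnorm M = \sum_j frob (col j svd_cols).
Proof.
rewrite /nucnorm (perm_big _ eigvals_gram) big_map big_enum /=.
by apply: eq_bigr => j _; rewrite svd_diagE sqrtr_sqr ger0_norm ?frob_ge0.
Qed.

Lemma nucnorm_ge0 : 0 <= nucnorm M.
Proof. by rewrite nucnormE sumr_ge0 // => j _; exact: frob_ge0. Qed.

Lemma rdot_svd_cols (W : 'M[C]_(m, n)) : rdot (W *m svd_rot) svd_cols = rdot W M.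
Proof. by rewrite rdot_mulmxr /svd_cols -mulmxA mul_svd_rot_adj mulmx1. Qed.

End SingularValues.

Lemma sum_sqr_le_sqr_sum (R : realDomainType) I (r : seq I) (P : pred I) (f : I -> R) :
  (forall i, 0 <= f i) ->
  \sum_(i <- r | P i) f i ^+ 2 <= (\sum_(i <- r | P i) f i) ^+ 2.
Proof.
move=> f0; suff [] : \sum_(i <- r | P i) f i ^+ 2 <= (\sum_(i <- r | P i) f i) ^+ 2 /\
   0 <= \sum_(i <- r | P i) f i by [].
elim/big_rec2: _ => [|i y1 y2 _ [h1 h2]]; first by rewrite expr0n /= lexx.
by have := f0 i; split; [nra | rewrite addr_ge0].
Qed.

Section NuclearNormBounds.
Variable R : realType.
Local Notation C := R[i].
Local Notation conj := (@Num.conj C).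

Lemma frob_col_unitary n (U : 'M[C]_n) j : adjmx U *m U = 1%:M -> frob (col j U) = 1.
Proof.
move=> UU; have /complexI h1 : (frob (col j U) ^+ 2)%:C = 1%:C.
  by rewrite -adjmx_mul_self_diag UU mxE eqxx.
by rewrite frobE -frob_sq h1 sqrtr1.
Qed.

Lemma rdot_le_nucnorm m n (W M : 'M[C]_(m, n)) (s : R) :
  (forall v : 'cV[C]_n, frob (W *m v) <= s * frob v) -> rdot W M <= s * nucnorm M.
Proof.
move=> hW; rewrite -rdot_svd_cols rdot_cols nucnormE mulr_sumr; apply: ler_sum => j _.
apply: le_trans (rdot_le _ _) _; rewrite ler_wpM2r ?frob_ge0 //.
rewrite colE -mulmxA -colE; have := hW (col j (svd_rot M)).
by rewrite frob_col_unitary ?mulr1 // mul_adj_svd_rot.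
Qed.

Lemma frob_le_nucnorm m n (M : 'M[C]_(m, n)) : frob M <= nucnorm M.
Proof.
apply: ler_of_sqr; first exact: nucnorm_ge0.
rewrite frob_sq -rdot_svd_cols -/(svd_cols M) rdot_cols nucnormE.
under eq_bigr => j _ do rewrite -frob_sq.
by apply: sum_sqr_le_sqr_sum => j; exact: frob_ge0.
Qed.

(* The columns of [svd_cols (u v^* )] are multiples of [u] and pairwise
   orthogonal, so at most one of them is nonzero. *)
Lemma nucnorm_rank1_le m n (u : 'cV[C]_m) (v : 'cV[C]_n) :
  nucnorm (u *m adjmx v) <= frob (u *m adjmx v).
Proof.
set M := u *m adjmx v; set w := adjmx (svd_rot M) *m v.
have colsE : svd_cols M = u *m adjmx w by rewrite /svd_cols -mulmxA adjmxM adjmxK.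
have gramE j k : (adjmx (svd_cols M) *m svd_cols M) j k =
    w j 0 * conj (w k 0) * \sum_i conj (u i 0) * u i 0.
  have entryE i l : (u *m adjmx w) i l = u i 0 * conj (w l 0).
    by rewrite mxE big_ord1 adjmxE.
  rewrite colsE adjmx_mulE mulr_sumr; apply: eq_bigr => i _.
  by rewrite !entryE rmorphM /= conjCK; ring.
set f := fun j => frob (col j (svd_cols M)).
have f_orth j k : j != k -> f j * f k = 0.
  move=> jk; apply/eqP; rewrite -sqrf_eq0 exprMn /f.
  have sqE i : frob (col i (svd_cols M)) ^+ 2 = Re ((adjmx (svd_cols M) *m svd_cols M) i i).
    by rewrite adjmx_mul_self_diag.
  set s := \sum_i _ in gramE.
  have Ims : Im s = 0 by rewrite cIm_sum big1 // => i _; rewrite cImM cReJ cImJ; ring.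
  have := svd_cols_orthogonal M jk; rewrite !sqE !gramE => /(congr1 (@cabs2 R)).
  rewrite /cabs2 !cReM !cImM !cReJ !cImJ Ims /= => e.
  have z : (0 : R) ^+ 2 + 0 ^+ 2 = 0 by rewrite expr2 mulr0 addr0.
  by apply/eqP; rewrite -{}z -{}e; ring.
apply: ler_of_sqr; first exact: frob_ge0.
rewrite frob_sq -(rdot_svd_cols M M) rdot_cols nucnormE -/f expr2 mulr_suml.
apply: ler_sum => j _; rewrite mulr_sumr (bigD1 j) //= big1 ?addr0.
  by rewrite -frob_sq expr2.
by move=> k kj; rewrite f_orth // eq_sym.
Qed.

Section PolarFactor.
Variables (m n : nat) (M : 'M[C]_(m, n)).
Local Notation sv j := (frob (col j (svd_cols M))).

(* The partial isometry [U V^*] of [M = U Sigma V^*]: the columns of [svd_cols M]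
   are normalized, except that zero columns stay zero (since [0^-1 = 0]). *)
Definition polarmx : 'M[C]_(m, n) :=
  svd_cols M *m diag_mx (\row_j ((sv j)^-1)%:C) *m adjmx (svd_rot M).

Lemma rdot_polarmx : rdot polarmx M = nucnorm M.
Proof.
rewrite /polarmx rdot_mulmxr adjmxK -/(svd_cols M) rdot_mulmxl nucnormE /rdot.
apply: eq_bigr => i _; rewrite (bigD1 i) //= big1 ?addr0 => [|j ji]; last first.
  by rewrite !mxE eq_sym (negbTE ji) mulr0n /=; ring.
rewrite adjmx_mul_self_diag !mxE eqxx mulr1n /= mulr0 addr0.
have [->|sv0] := eqVneq (sv i) 0; first by rewrite invr0 mul0r.
by rewrite expr2 mulrA mulVf ?mul1r.
Qed.

Lemma frob_polarmx_mul_le (v : 'cV[C]_n) : frob (polarmx *m v) <= frob v.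
Proof.
apply: ler_of_sqr; first exact: frob_ge0.
set y := adjmx (svd_rot M) *m v.
have -> : frob v ^+ 2 = frob y ^+ 2.
  by rewrite !frob_sq rdot_mulmxl adjmxK mulmxA mul_svd_rot_adj mul1mx.
rewrite /polarmx -mulmxA -/y -mulmxA !frob_sq rdot_mulmxl mulmxA svd_cols_gram.
rewrite !mul_diag_mx /rdot; apply: ler_sum => j _; apply: ler_sum => k _.
rewrite !mxE svd_diagE /= !cReM !cImM /= !mul0r !subr0 !addr0.
have [->|s_neq0] := eqVneq (frob (col j (svd_cols M))) 0.
  by rewrite invr0 !mul0r !add0r -!expr2 addr_ge0 ?sqr_ge0.
by rewrite le_eqVlt; apply/orP; left; apply/eqP; field.
Qed.

End PolarFactor.

(* The subgradient used is [outer h x + P_h^perp polarmx (PTperp h x Hd) P_x^perp],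
   of spectral norm at most 1. *)
Lemma nucnorm_subgradient K N (h : 'cV[R]_K) (x : 'cV[R]_N) (al : R) (Hd : 'M[C]_(K, N)) :
  unitvec h -> unitvec x ->
  al + rdot (outer h x) Hd + nucnorm (PTperp h x Hd) <= nucnorm (al%:C *: outer h x + Hd).
Proof.
move=> hu xu; set G := PTperp h x Hd.
set W := outer h x + lproj_perp h *m polarmx G *m lproj_perp x.
have W_contr (v : 'cV[C]_N) : frob (W *m v) <= 1 * frob v.
  rewrite mul1r; apply: ler_of_sqr; first exact: frob_ge0.
  set z := polarmx G *m (lproj_perp x *m v).
  have WvE : W *m v = outer h x *m v + lproj_perp h *m z by rewrite mulmxDl !mulmxA.
  have orth : rdot (outer h x *m v) (lproj_perp h *m z) = 0.
    by rewrite rdotC rdot_mulmxl adjmx_lproj_perp // mulmxA lproj_perp_outer // mul0mx rdot0r.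
  have e1 : frob (outer h x *m v) ^+ 2 = frob (lproj x *m v) ^+ 2.
    by rewrite !frob_sq lprojE /outer -!mulmxA rdot_mul_unitvec // rdot_mul_unitvec.
  have l1 : frob (lproj_perp h *m z) <= frob (lproj_perp x *m v).
    by apply: le_trans (frob_lproj_perp_le hu _) _; exact: frob_polarmx_mul_le.
  have := frob_ge0 (lproj_perp h *m z); have := frob_ge0 (lproj_perp x *m v).
  rewrite WvE frob_sq rdotDl !rdotDr orth (rdotC (lproj_perp h *m z)) orth -!frob_sq e1.
  rewrite (frob_lproj_perp_sq xu v); nra.
have := rdot_le_nucnorm (al%:C *: outer h x + Hd) W_contr; rewrite mul1r.
apply: le_trans; rewrite le_eqVlt; apply/orP; left.
rewrite /W rdotDl rdotDr rdotZr rdot_outer // mulr1; apply/eqP; congr (_ + _).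
have GE : lproj_perp h *m ((al%:C *: outer h x + Hd) *m lproj_perp x) = G.
  rewrite mulmxDl mulmxDr -scalemxAl -scalemxAr (mulmxA (lproj_perp h) (outer h x)).
  by rewrite lproj_perp_outer // mul0mx scaler0 add0r /G PTperpE mulmxA.
rewrite rdot_mulmxr rdot_mulmxl adjmx_lproj_perp // adjmx_lproj_perp //.
by rewrite GE rdot_polarmx.
Qed.

End NuclearNormBounds.

(** * Exact recovery *)

(* Cauchy-Schwarz against the all-ones vector. *)
Lemma sqr_sum_le_card (R : realType) r (f : 'I_r -> R) :
  (\sum_i f i) ^+ 2 <= r%:R * \sum_i f i ^+ 2.
Proof.
pose u : 'cV[R[i]]_r := \col_i (f i)%:C.
pose w : 'cV[R[i]]_r := \col_i 1.
have uw : rdot u w = \sum_i f i by apply: eq_bigr => i _; rewrite big_ord1 !mxE /=; ring.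
have uu : rdot u u = \sum_i f i ^+ 2 by apply: eq_bigr => i _; rewrite big_ord1 !mxE /=; ring.
have ww : rdot w w = r%:R.
  rewrite /rdot (eq_bigr (fun _ => 1)) => [|i _]; last by rewrite big_ord1 !mxE /=; ring.
  by rewrite sumr_const card_ord.
have := norm_rdot_le u w; rewrite uw => le_uw.
have : `|\sum_i f i| ^+ 2 <= (frob u * frob w) ^+ 2.
  by rewrite ler_sqr ?qualifE /= ?mulr_ge0 ?frob_ge0 ?normr_ge0.
by rewrite real_normK ?num_real // exprMn !frob_sq uu ww mulrC.
Qed.

Section Incoherence.
Variable R : realType.
Local Notation C := R[i].
Variables (r L : nat) (K N : 'I_r -> nat).
Variables (h : forall i, 'cV[R]_(K i)) (x : forall i, 'cV[R]_(N i)).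
Variables (b : forall i, 'I_L -> 'cV[C]_(K i)) (a : forall i, 'I_L -> 'cV[R]_(N i)).

Lemma mu_ge0 : 0 <= mu h x b a.
Proof. by rewrite /mu bigmax_idl le_max lexx. Qed.

Lemma opnorm_cross_le_mu j k : k != j ->
  opnorm (fun Z : 'M[C]_(K k, N k) =>
    PT (h j) (x j) (Aadj (b j) (a j) (Aop (b k) (a k) (PT (h k) (x k) Z)))) <= mu h x b a.
Proof.
move=> kj; pose F j0 k0 := opnorm (fun Z : 'M[C]_(K k0, N k0) =>
  PT (h j0) (x j0) (Aadj (b j0) (a j0) (Aop (b k0) (a k0) (PT (h k0) (x k0) Z)))).
apply: le_trans (le_bigmax_cond 0 (F j) kj) _.
exact: (le_bigmax 0 (fun j0 => \big[Num.max/0]_(k0 < r | k0 != j0) F j0 k0) j).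
Qed.

End Incoherence.

Section LocalGeometry.
Variable R : realType.
Local Notation C := R[i].

Lemma rdot_Aop_tangent_ge K N L (h : 'cV[R]_K) (x : 'cV[R]_N)
    (b : 'I_L -> 'cV[C]_K) (a : 'I_L -> 'cV[R]_N) (delta : R) (Y : 'M[C]_(K, N)) :
  opnorm (fun Z => PT h x (Aadj b a (Aop b a (PT h x Z))) - PT h x Z) <= delta ->
  PT h x Y = Y ->
  (1 - delta) * frob Y ^+ 2 <= rdot (Aop b a Y) (Aop b a Y).
Proof.
move=> iso PTY.
pose f Z := PT h x (Aadj b a (Aop b a (PT h x Z))) - PT h x Z.
have fD U V : f (U + V) = f U + f V.
  by rewrite /f !PTD AopD AadjD PTD opprD addrACA.
have fZ c U : f (c *: U) = c *: f U by rewrite /f !PTZ AopZ AadjZ PTZ scalerBr.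
set g := PT h x (Aadj b a (Aop b a Y)) - Y.
have g_le : frob g <= delta * frob Y.
  have gE : g = f Y by rewrite /f PTY.
  rewrite gE; apply: le_trans (frob_le_opnorm fD fZ Y) _.
  by rewrite ler_wpM2r ?frob_ge0.
have -> : rdot (Aop b a Y) (Aop b a Y) = rdot Y g + frob Y ^+ 2.
  by rewrite /g rdotBr frob_sq subrK rdot_Aop -{1}PTY rdot_PT.
have := norm_rdot_le Y g; rewrite ler_norml => /andP[lo _].
have : frob Y * frob g <= frob Y * (delta * frob Y) by rewrite ler_wpM2l ?frob_ge0.
nra.
Qed.

Lemma rdot_Aop_cross_ge K1 N1 K2 N2 L (h1 : 'cV[R]_K1) (x1 : 'cV[R]_N1)
    (h2 : 'cV[R]_K2) (x2 : 'cV[R]_N2) (b1 : 'I_L -> 'cV[C]_K1) (a1 : 'I_L -> 'cV[R]_N1)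
    (b2 : 'I_L -> 'cV[C]_K2) (a2 : 'I_L -> 'cV[R]_N2) (Y1 : 'M[C]_(K1, N1)) (Y2 : 'M[C]_(K2, N2)) :
  PT h1 x1 Y1 = Y1 -> PT h2 x2 Y2 = Y2 ->
  - (opnorm (fun Z => PT h1 x1 (Aadj b1 a1 (Aop b2 a2 (PT h2 x2 Z)))) * (frob Y1 * frob Y2))
    <= rdot (Aop b1 a1 Y1) (Aop b2 a2 Y2).
Proof.
move=> PTY1 PTY2.
pose f Z := PT h1 x1 (Aadj b1 a1 (Aop b2 a2 (PT h2 x2 Z))).
have fD U V : f (U + V) = f U + f V by rewrite /f !PTD AopD AadjD PTD.
have fZ c U : f (c *: U) = c *: f U by rewrite /f !PTZ AopZ AadjZ PTZ.
have g_le := frob_le_opnorm fD fZ Y2; rewrite /f PTY2 in g_le.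
have -> : rdot (Aop b1 a1 Y1) (Aop b2 a2 Y2) = rdot Y1 (PT h1 x1 (Aadj b1 a1 (Aop b2 a2 Y2))).
  by rewrite rdot_Aop -{1}PTY1 rdot_PT.
have := norm_rdot_le Y1 (PT h1 x1 (Aadj b1 a1 (Aop b2 a2 Y2))).
rewrite ler_norml => /andP[lo _]; apply: le_trans lo.
by rewrite lerN2 mulrCA ler_wpM2l ?frob_ge0.
Qed.

Lemma dual_certificate_ge K N (h : 'cV[R]_K) (x : 'cV[R]_N) (W Hd : 'M[C]_(K, N))
    (alpha beta : R) :
  unitvec h -> unitvec x ->
  frob (outer h x - PT h x W) <= alpha -> specnorm (PTperp h x W) <= beta ->
  rdot W Hd - alpha * frob (PT h x Hd) - beta * nucnorm (PTperp h x Hd)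
    <= rdot (outer h x) Hd.
Proof.
move=> hu xu alphaW betaW.
have PT_err : PT h x (outer h x - PT h x W) = outer h x - PT h x W.
  by rewrite PTB (PT_outer x hu) (PT_id hu xu).
have tanE : rdot (outer h x - PT h x W) Hd = rdot (outer h x - PT h x W) (PT h x Hd).
  by rewrite -{1}PT_err rdot_PT.
have perpE : rdot (PTperp h x W) Hd = rdot (PTperp h x W) (PTperp h x Hd).
  by rewrite -{1}(PTperp_id hu xu W) rdot_PTperp.
have tan_ge : - (alpha * frob (PT h x Hd)) <= rdot (outer h x - PT h x W) Hd.
  rewrite tanE; have := norm_rdot_le (outer h x - PT h x W) (PT h x Hd).
  rewrite ler_norml => /andP[lo _]; apply: le_trans lo.
  by rewrite lerN2 ler_wpM2r ?frob_ge0.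
have perp_le : rdot (PTperp h x W) Hd <= beta * nucnorm (PTperp h x Hd).
  rewrite perpE; apply: le_trans (rdot_le_nucnorm _ _) _.
    by apply: frob_le_opnorm => [U V|c U]; rewrite ?mulmxDr ?scalemxAr.
  by rewrite ler_wpM2r ?nucnorm_ge0.
have : rdot (outer h x) Hd = rdot (outer h x - PT h x W) Hd - rdot (PTperp h x W) Hd + rdot W Hd.
  by rewrite PTperp_sub rdotBl rdotBl; ring.
lra.
Qed.

Lemma nucnorm_outer_le K N (h : 'cV[R]_K) (x : 'cV[R]_N) (al : R) :
  unitvec h -> unitvec x -> nucnorm (al%:C *: outer h x) <= `|al|.
Proof.
move=> hu xu; rewrite /outer scalemxAl; apply: le_trans (nucnorm_rank1_le _ _) _.
by rewrite -scalemxAl frobZr frobE rdot_outer // sqrtr1 mulr1.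
Qed.

End LocalGeometry.

Section Recovery.
Variable R : realType.
Local Notation C := R[i].
Variables (r L : nat) (K N : 'I_r -> nat).
Variables (h : forall i, 'cV[R]_(K i)) (x : forall i, 'cV[R]_(N i)) (alpha_ : 'I_r -> R).
Variables (b : forall i, 'I_L -> 'cV[C]_(K i)) (a : forall i, 'I_L -> 'cV[R]_(N i)).
Variable gamma : R.
Hypotheses (hu : forall i, unitvec (h i)) (xu : forall i, unitvec (x i)).
Hypothesis alpha_pos : forall i, 0 < alpha_ i.
Hypothesis isometry : forall i, opnorm (fun Z : 'M[C]_(K i, N i) =>
  PT (h i) (x i) (Aadj (b i) (a i) (Aop (b i) (a i) (PT (h i) (x i) Z))) - PT (h i) (x i) Z)
  <= 4^-1.
Hypothesis incoherence : mu h x b a <= (4 * r%:R)^-1.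
Hypothesis Aop_le : forall i, opnorm (Aop (b i) (a i)) <= gamma.

Variable Hd : forall i, 'M[C]_(K i, N i).
Hypothesis Hd_ker : \sum_i Aop (b i) (a i) (Hd i) = 0.

Local Notation X i := ((alpha_ i)%:C *: outer (h i) (x i)).
Local Notation tan i := (PT (h i) (x i) (Hd i)).
Local Notation perp i := (PTperp (h i) (x i) (Hd i)).
Local Notation S := (\sum_i frob (tan i)).
Local Notation T := (\sum_i nucnorm (perp i)).
Local Notation Q := (\sum_i frob (tan i) ^+ 2).
Local Notation v := (\sum_i Aop (b i) (a i) (tan i)).
Local Notation mu := (mu h x b a).

Lemma frob_Aop_tan_le : frob v <= gamma * T.
Proof.
have -> : v = - \sum_i Aop (b i) (a i) (perp i).
  apply/eqP; rewrite -addr_eq0 -big_split /=; apply/eqP; rewrite -[RHS]Hd_ker.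
  by apply: eq_bigr => i _; rewrite -AopD PTperp_sub addrC subrK.
rewrite frobN mulr_sumr; apply: le_trans (frob_sum _ _ _) _; apply: ler_sum => i _.
apply: le_trans (frob_le_opnorm (AopD _ _) (AopZ _ _) _) _.
apply: le_trans (ler_wpM2l (opnorm_ge0 _) (frob_le_nucnorm _)) _.
by rewrite ler_wpM2r ?nucnorm_ge0.
Qed.

Lemma sqr_frob_Aop_tan_ge : (1 - 4^-1) * Q - mu * S ^+ 2 <= frob v ^+ 2.
Proof.
have tanK i : PT (h i) (x i) (tan i) = tan i := PT_id (hu i) (xu i) _.
have cross j k : k != j ->
    - (mu * (frob (tan j) * frob (tan k)))
      <= rdot (Aop (b j) (a j) (tan j)) (Aop (b k) (a k) (tan k)).
  move=> kj; apply: le_trans _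
    (rdot_Aop_cross_ge (b j) (a j) (b k) (a k) (tanK j) (tanK k)).
  by rewrite lerN2 ler_wpM2r ?mulr_ge0 ?frob_ge0 ?opnorm_cross_le_mu.
have row j : (1 - 4^-1) * frob (tan j) ^+ 2 - mu * S * frob (tan j)
    <= rdot (Aop (b j) (a j) (tan j)) v.
  have diag := rdot_Aop_tangent_ge (isometry j) (tanK j).
  have off : - (mu * (frob (tan j) * \sum_(k < r | k != j) frob (tan k)))
      <= \sum_(k < r | k != j) rdot (Aop (b j) (a j) (tan j)) (Aop (b k) (a k) (tan k)).
    by rewrite !mulr_sumr -sumrN; apply: ler_sum => k kj; exact: cross.
  have SE : S = frob (tan j) + \sum_(k < r | k != j) frob (tan k) by rewrite (bigD1 j).
  rewrite SE rdot_sumr [Y in _ <= Y](bigD1 j) //=.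
  have : 0 <= mu * frob (tan j) ^+ 2 by rewrite mulr_ge0 ?mu_ge0 ?sqr_ge0.
  move: off diag; lra.
rewrite frob_sq rdot_suml; apply: le_trans _ (ler_sum _ (fun j _ => row j)).
by rewrite sumrB -!mulr_sumr expr2 mulrA.
Qed.

Lemma sum_frob_tan_le : S <= 2 * r%:R * gamma * T.
Proof.
have S_sq : S ^+ 2 <= r%:R * Q := sqr_sum_le_card _.
have Q0 : 0 <= Q by apply: sumr_ge0 => i _; exact: sqr_ge0.
have mu_r : mu * r%:R <= 4^-1.
  have [r0|r_gt0] := posnP r; first by rewrite [in r%:R]r0 mulr0 invr_ge0.
  by rewrite -ler_pdivlMr ?ltr0n // -invfM.
have muS : mu * S ^+ 2 <= 4^-1 * Q.
  apply: le_trans (ler_wpM2l (mu_ge0 h x b a) S_sq) _.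
  by rewrite mulrA ler_wpM2r.
have v0 := frob_ge0 v; have gT0 := le_trans v0 frob_Aop_tan_le.
have Q_le : Q <= 2 * (gamma * T) ^+ 2.
  have : frob v ^+ 2 <= (gamma * T) ^+ 2.
    by rewrite ler_sqr ?nnegrE // frob_Aop_tan_le.
  have := sqr_frob_Aop_tan_ge; lra.
have r_sq : r%:R <= r%:R ^+ 2 :> R.
  by rewrite -natrX ler_nat; case: (r) => // n; rewrite expnS leq_pmulr ?expn_gt0.
apply: ler_of_sqr.
  by rewrite -mulrA; apply: mulr_ge0 gT0; rewrite mulr_ge0 ?ler0n.
apply: le_trans S_sq _.
have -> : (2 * r%:R * gamma * T) ^+ 2 = r%:R ^+ 2 * (4 * (gamma * T) ^+ 2) by ring.
apply: ler_pM (ler0n _ _) Q0 r_sq _.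
have := sqr_ge0 (gamma * T); lra.
Qed.

Lemma perp_sum_eq0 : T = 0 -> forall i, Hd i = 0.
Proof.
move=> T0 i.
have S0 : S = 0.
  apply/eqP; rewrite eq_le sumr_ge0 ?andbT => [|j _]; last exact: frob_ge0.
  by have := sum_frob_tan_le; rewrite T0 mulr0.
have tan0 : tan i = 0.
  by apply: frob_eq0; apply: (psumr_eq0P (fun j _ => frob_ge0 (tan j)) S0).
have perp0 : perp i = 0.
  apply: frob_eq0; apply/eqP; rewrite eq_le frob_ge0 andbT.
  apply: le_trans (frob_le_nucnorm _) _.
  by rewrite (psumr_eq0P (fun j _ => nucnorm_ge0 (perp j)) T0).
by rewrite -[Hd i](subrK (tan i)) -PTperp_sub perp0 tan0 add0r.
Qed.

Lemma sum_nucnorm_ge (lam : 'cV[C]_L) (alpha beta : R) :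
  (forall i, frob (outer (h i) (x i) - PT (h i) (x i) (Aadj (b i) (a i) lam)) <= alpha /\
             specnorm (PTperp (h i) (x i) (Aadj (b i) (a i) lam)) <= beta) ->
  \sum_i alpha_ i + (1 - beta) * T - alpha * S <= \sum_i nucnorm (X i + Hd i).
Proof.
move=> cert.
have step i : alpha_ i + (rdot (Aadj (b i) (a i) lam) (Hd i) - alpha * frob (tan i)
    - beta * nucnorm (perp i)) + nucnorm (perp i) <= nucnorm (X i + Hd i).
  apply: le_trans (nucnorm_subgradient _ _ (hu i) (xu i)); rewrite lerD2r lerD2l.
  by have [] := cert i; exact: dual_certificate_ge.
have kernel : \sum_i rdot (Aadj (b i) (a i) lam) (Hd i) = 0.
  rewrite (eq_bigr (fun i => rdot (Aop (b i) (a i) (Hd i)) lam)) => [|i _].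
    by rewrite -rdot_suml Hd_ker rdot0l.
  by rewrite rdot_Aop rdotC.
apply: le_trans (ler_sum _ (fun i _ => step i)); rewrite le_eqVlt; apply/orP; left.
by rewrite !big_split /= kernel !sumrN -!mulr_sumr; apply/eqP; ring.
Qed.

Lemma sum_nucnorm_lt (lam : 'cV[C]_L) (alpha beta : R) :
  (forall i, frob (outer (h i) (x i) - PT (h i) (x i) (Aadj (b i) (a i) lam)) <= alpha /\
             specnorm (PTperp (h i) (x i) (Aadj (b i) (a i) lam)) <= beta) ->
  0 < (1 - beta) - 2 * r%:R * gamma * alpha -> ~ (forall i, Hd i = 0) ->
  \sum_i nucnorm (X i) < \sum_i nucnorm (X i + Hd i).
Proof.
move=> cert gap Hd_neq0.
have [r0|r_gt0] := posnP r.
  by case: Hd_neq0 => i; have := ltn_ord i; rewrite [Y in (_ < Y)%N]r0.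
have alpha0 : 0 <= alpha := le_trans (frob_ge0 _) (cert (Ordinal r_gt0)).1.
have T_gt0 : 0 < T.
  rewrite lt_def sumr_ge0 ?andbT => [|i _]; last exact: nucnorm_ge0.
  by apply/eqP => /perp_sum_eq0.
have X_le : \sum_i nucnorm (X i) <= \sum_i alpha_ i.
  apply: ler_sum => i _; apply: le_trans (nucnorm_outer_le _ (hu i) (xu i)) _.
  by rewrite ger0_norm ?(ltW (alpha_pos i)).
apply: le_lt_trans X_le (lt_le_trans _ (sum_nucnorm_ge cert)).
rewrite -addrA ltrDl; apply: lt_le_trans (mulr_gt0 gap T_gt0) _.
have -> : (1 - beta - 2 * r%:R * gamma * alpha) * T
    = (1 - beta) * T - alpha * (2 * r%:R * gamma * T) by ring.
by rewrite lerD2l lerN2 ler_wpM2l ?sum_frob_tan_le.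
Qed.

End Recovery.

Lemma default_gap_gt0 (R : realFieldType) (r : nat) (gamma : R) :
  0 < (1 - 2^-1) - 2 * r%:R * gamma * (5 * r%:R * gamma)^-1.
Proof.
have [->|D0] := eqVneq (5 * r%:R * gamma) 0; first by rewrite invr0 mulr0; lra.
have -> : 2 * r%:R * gamma = 2 / 5 * (5 * r%:R * gamma) by field.
rewrite mulfK //; lra.
Qed.

Theorem lemma2 (R : realType) (r L : nat) (K N : 'I_r -> nat)
  (h : forall i, 'cV[R]_(K i)) (x : forall i, 'cV[R]_(N i)) (alpha_ : 'I_r -> R)
  (b : forall i, 'I_L -> 'cV[R[i]]_(K i)) (a : forall i, 'I_L -> 'cV[R]_(N i))
  (gamma : R) :
  (forall i, unitvec (h i)) -> (forall i, unitvec (x i)) ->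
  (forall i, 0 < alpha_ i) ->
  (forall i, opnorm (fun Z : 'M[R[i]]_(K i, N i) =>
     PT (h i) (x i) (Aadj (b i) (a i) (Aop (b i) (a i) (PT (h i) (x i) Z)))
     - PT (h i) (x i) Z) <= 4^-1) ->
  mu h x b a <= (4 * r%:R)^-1 ->
  (forall i, opnorm (Aop (b i) (a i)) <= gamma) ->
  let X := fun i => real_complex R (alpha_ i) *: (cmx (h i) *m adjmx (cmx (x i))) in
  let y := \sum_(i < r) Aop (b i) (a i) (X i) in
  (forall alpha beta : R,
     (exists lam : 'cV[R[i]]_L, forall i,
        frob (cmx (h i) *m adjmx (cmx (x i)) - PT (h i) (x i) (Aadj (b i) (a i) lam))
          <= alpha /\
        specnorm (PTperp (h i) (x i) (Aadj (b i) (a i) lam)) <= beta) ->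
     0 < (1 - beta) - 2 * r%:R * gamma * alpha ->
     unique_minimizer b a y X)
  /\
  ((exists lam : 'cV[R[i]]_L, forall i,
      frob (cmx (h i) *m adjmx (cmx (x i)) - PT (h i) (x i) (Aadj (b i) (a i) lam))
        <= (5 * r%:R * gamma)^-1 /\
      specnorm (PTperp (h i) (x i) (Aadj (b i) (a i) lam)) <= 2^-1) ->
   unique_minimizer b a y X).
Proof.
move=> hu xu alpha_pos isometry incoherence Aop_le X y.
have recovery alpha beta : (exists lam : 'cV[R[i]]_L, forall i,
      frob (cmx (h i) *m adjmx (cmx (x i)) - PT (h i) (x i) (Aadj (b i) (a i) lam))
        <= alpha /\
      specnorm (PTperp (h i) (x i) (Aadj (b i) (a i) lam)) <= beta) ->
    0 < (1 - beta) - 2 * r%:R * gamma * alpha -> unique_minimizer b a y X.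
  move=> [lam cert] gap; split=> // Z yZ Z_neqX.
  have ker : \sum_i Aop (b i) (a i) (Z i - X i) = 0.
    by rewrite (eq_bigr _ (fun i _ => AopB _ _ _ _)) sumrB yZ subrr.
  have ZE i : nucnorm (Z i) = nucnorm (X i + (Z i - X i)) by rewrite addrC subrK.
  rewrite [Y in _ < Y](eq_bigr _ (fun i _ => ZE i)).
  apply: (sum_nucnorm_lt hu xu alpha_pos isometry incoherence Aop_le ker cert gap).
  by move=> Z_eqX; apply: Z_neqX => i; apply/eqP; rewrite -subr_eq0 Z_eqX.
split=> [|cert]; first exact: recovery.
exact: recovery cert (default_gap_gt0 _ _).
Qed.
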